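(* Let $E\subset\mathbb T$ be an infinite set and $K_1\subset\mathbb T$ a compact set with $\overline{E}\cap K_1=\emptyset$. Let $$\mathcal R=\Big\{c_0+i\sum_{k=1}^n c_k\frac{e^{i\psi_k}+z}{e^{i\psi_k}-z}\ :\ n\in\mathbb N,\ c_0,c_1,\dots,c_n\in\mathbb R,\ e^{i\psi_k}\in E\ (1\le k\le n)\Big\}.$$ Then each element of $\mathcal R$ is real-valued on $K_1$, and the set of restrictions $\{r_{|_{K_1}}: r\in\mathcal R\}$ is uniformly dense in $C_{\mathbb R}(K_1)$, the space of real-valued continuous functions on $K_1$.
   Context: $\mathbb T$ is the unit circle in $\mathbb C$; $z$ denotes the complex variable. *)

From Stdlib Require Import Reals Lra Lia List.
Open Scope R_scope.

Definition Cx : Type := (R * R)%type.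
Definition Re (z : Cx) : R := fst z.
Definition Im (z : Cx) : R := snd z.
Definition RtoC (x : R) : Cx := (x, 0).
Definition Ci : Cx := (0, 1).
Definition Cplus (z w : Cx) : Cx := (Re z + Re w, Im z + Im w).
Definition Cminus (z w : Cx) : Cx := (Re z - Re w, Im z - Im w).
Definition Cmult (z w : Cx) : Cx :=
  (Re z * Re w - Im z * Im w, Re z * Im w + Im z * Re w).
Definition Cinv (z : Cx) : Cx :=
  (Re z / (Re z ^ 2 + Im z ^ 2), - Im z / (Re z ^ 2 + Im z ^ 2)).
Definition Cdiv (z w : Cx) : Cx := Cmult z (Cinv w).
Definition Cmod (z : Cx) : R := sqrt (Re z ^ 2 + Im z ^ 2).
Definition Cdist (z w : Cx) : R := Cmod (Cminus z w).

Definition unit_circle (z : Cx) : Prop := Re z ^ 2 + Im z ^ 2 = 1.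

Definition closureC (A : Cx -> Prop) (z : Cx) : Prop :=
  forall eps, 0 < eps -> exists w, A w /\ Cdist z w < eps.
Definition openC (U : Cx -> Prop) : Prop :=
  forall z, U z -> exists eps, 0 < eps /\ forall w, Cdist z w < eps -> U w.
Definition compactC (K : Cx -> Prop) : Prop :=
  forall (I : Type) (U : I -> Cx -> Prop),
    (forall i, openC (U i)) ->
    (forall z, K z -> exists i, U i z) ->
    exists l : list I, forall z, K z -> exists i, In i l /\ U i z.
Definition infinite_set (A : Cx -> Prop) : Prop :=
  ~ exists l : list Cx, forall z, A z -> In z l.

Definition continuous_onC (K : Cx -> Prop) (f : Cx -> R) : Prop :=
  forall z, K z -> forall eps, 0 < eps -> exists delta, 0 < delta /\
    forall w, K w -> Cdist z w < delta -> Rabs (f z - f w) < eps.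

Fixpoint herg_sum (n : nat) (c : nat -> R) (w : nat -> Cx) (z : Cx) : Cx :=
  match n with
  | O => (0, 0)
  | S m => Cplus (herg_sum m c w z)
      (Cmult (RtoC (c n)) (Cdiv (Cplus (w n) z) (Cminus (w n) z)))
  end.

(* r(z) = c_0 + i * sum_{k=1}^n c_k (w_k + z)/(w_k - z), w_k = e^{i psi_k} *)
Definition rfun (n : nat) (c0 : R) (c : nat -> R) (w : nat -> Cx) (z : Cx) : Cx :=
  Cplus (RtoC c0) (Cmult Ci (herg_sum n c w z)).

(* Realness: for w and z on the unit circle with w <> z, (w + z) / (w - z) is
   purely imaginary, so every r = c0 + i sum c_k (w_k + z)/(w_k - z) with poles
   w_k in E is real on K1 (E and K1 are disjoint).

   Density: on K1, Re r = c0 + sum c_k hk (w_k) z with the real kernel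
   hk w z = Re (i (w + z) / (w - z)).  Call a real function approximable if it
   is a uniform limit on K1 of such sums; these form a uniformly closed vector
   space containing the constants and every hk w, w in E.  Since E is infinite
   it accumulates at some a of the circle, with a outside K1; u = hk a is then
   bounded on K1.  The addition formula for Cayley transforms,
     hk w z * (hk a w - hk a z) = hk a z * hk a w + 1,
   shows, letting w -> a in E (so hk a w -> oo), that u and u^2 are
   approximable and then that the class is stable under multiplication by u.
   Hence it contains every Bernstein polynomial in y = (u + M) / (2 M), which
   maps K1 into [0,1]; as z is recovered Lipschitz-continuously from u(z)
   (inverse Cayley transform), Bernstein approximation in the coordinate y
   gives every continuous function on the compact K1. *)

From Stdlib Require Import Reals Lra Lia List Classical ClassicalEpsilon.
From Coquelicot Require Complex.
Open Scope R_scope.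

Definition sqdist (z w : Cx) : R := (fst z - fst w) ^ 2 + (snd z - snd w) ^ 2.

Lemma sqdist_nonneg z w : 0 <= sqdist z w.
Proof. unfold sqdist; pose proof (pow2_ge_0 (fst z - fst w)); pose proof (pow2_ge_0 (snd z - snd w)); lra. Qed.

Lemma sqdist_neq0 z w : z <> w -> sqdist z w <> 0.
Proof.
  intros Hzw H0; apply Hzw. destruct z as [z1 z2], w as [w1 w2]; unfold sqdist in H0; simpl in H0.
  pose proof (pow2_ge_0 (z1 - w1)); pose proof (pow2_ge_0 (z2 - w2)).
  assert (z1 - w1 = 0) by nra.
  assert (z2 - w2 = 0) by nra.
  f_equal; lra.
Qed.

Lemma Cdist_nonneg z w : 0 <= Cdist z w.
Proof. apply sqrt_pos. Qed.

Lemma Cdist_sq z w : Cdist z w ^ 2 = sqdist z w.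
Proof. simpl; rewrite Rmult_1_r; apply sqrt_sqrt, sqdist_nonneg. Qed.

Lemma Cdist_sym z w : Cdist z w = Cdist w z.
Proof. unfold Cdist, Cmod; simpl; f_equal; ring. Qed.

Lemma Cdist_refl z : Cdist z z = 0.
Proof. unfold Cdist, Cmod; simpl. rewrite <- sqrt_0; f_equal; ring. Qed.

Lemma Cdist_pos z w : z <> w -> 0 < Cdist z w.
Proof.
  intros Hzw. change (0 < sqrt (sqdist z w)). apply sqrt_lt_R0.
  pose proof (sqdist_neq0 z w Hzw). pose proof (sqdist_nonneg z w). lra.
Qed.

Lemma Cdist_lt_iff z w r : 0 <= r -> (Cdist z w < r <-> sqdist z w < r ^ 2).
Proof.
  intros Hr. rewrite <- Cdist_sq. pose proof (Cdist_nonneg z w). split; intros; nra.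
Qed.

Lemma Cdist_le_iff z w r : 0 <= r -> (Cdist z w <= r <-> sqdist z w <= r ^ 2).
Proof.
  intros Hr. rewrite <- Cdist_sq. pose proof (Cdist_nonneg z w). split; intros; nra.
Qed.

Lemma Cdist_triangle x y z : Cdist x z <= Cdist x y + Cdist y z.
Proof.
  assert (Hmod : forall u v, Cdist u v = Complex.Cmod (Complex.Cminus u v)).
  { intros [u1 u2] [v1 v2]. unfold Cdist, Cmod, Complex.Cmod; simpl. f_equal; ring. }
  rewrite !Hmod.
  replace (Complex.Cminus x z) with (Complex.Cplus (Complex.Cminus x y) (Complex.Cminus y z)).
  - apply Complex.Cmod_triangle.
  - destruct x, y, z; unfold Complex.Cminus, Complex.Cplus, Complex.Copp; simpl; f_equal; ring.
Qed.

Lemma ball_open z r : openC (fun t => Cdist z t < r).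
Proof.
  intros t Ht. exists (r - Cdist z t). split; [lra|].
  intros w Hw. pose proof (Cdist_triangle z t w). lra.
Qed.

Lemma compact_ball_cover (K : Cx -> Prop) (r : Cx -> R) :
  compactC K -> (forall z, K z -> 0 < r z) ->
  exists l : list Cx, forall t, K t -> exists z, In z l /\ K z /\ Cdist z t < r z.
Proof.
  intros HK Hr.
  destruct (HK Cx (fun z t => K z /\ Cdist z t < r z)) as [l Hl].
  - intros z t [Kz Ht]. destruct (ball_open z (r z) t Ht) as [e [He H]].
    exists e; split; auto.
  - intros z Kz. exists z. split; auto. rewrite Cdist_refl. auto.
  - exists l. intros t Kt. destruct (Hl t Kt) as [i [Hi [Ki Hc]]]. eauto.
Qed.

Fixpoint list_min (g : Cx -> R) (l : list Cx) : R :=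
  match l with nil => 1 | z :: l' => Rmin (g z) (list_min g l') end.

Lemma list_min_le g l z : In z l -> list_min g l <= g z.
Proof.
  induction l as [|y l IH]; simpl; [tauto|]. intros [<-|H].
  - apply Rmin_l.
  - pose proof (IH H). pose proof (Rmin_r (g y) (list_min g l)). lra.
Qed.

Lemma list_min_pos g l : (forall z, In z l -> 0 < g z) -> 0 < list_min g l.
Proof.
  induction l as [|y l IH]; simpl; intros H; [lra|].
  apply Rmin_glb_lt; auto.
Qed.

Lemma choose_radius (K : Cx -> Prop) (Q : Cx -> R -> Prop) :
  (forall z, K z -> exists d, 0 < d /\ Q z d) ->
  exists r : Cx -> R, forall z, 0 < r z /\ (K z -> Q z (r z)).
Proof.
  intros H.
  assert (Hex : forall z, exists d, 0 < d /\ (K z -> Q z d)).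
  { intros z. destruct (classic (K z)) as [Kz|Kz].
    - destruct (H z Kz) as [d [Hd HQ]]. eauto.
    - exists 1. split; [lra | tauto]. }
  exists (fun z => proj1_sig (constructive_indefinite_description _ (Hex z))).
  intros z. destruct (constructive_indefinite_description _ (Hex z)) as [d Hd]. exact Hd.
Qed.

Lemma compact_unif_cont (K : Cx -> Prop) (f : Cx -> R) :
  compactC K -> continuous_onC K f ->
  forall eps, 0 < eps -> exists delta, 0 < delta /\
    forall z t, K z -> K t -> Cdist z t < delta -> Rabs (f z - f t) < eps.
Proof.
  intros HK Hf eps Heps.
  destruct (choose_radius K (fun z d => forall t, K t -> Cdist z t < 2 * d ->
              Rabs (f z - f t) < eps / 2)) as [r Hr].
  { intros z Kz. destruct (Hf z Kz (eps / 2)) as [d [Hd H]]; [lra|].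
    exists (d / 2). split; [lra|]. intros t Kt Ht. apply H; auto; lra. }
  destruct (compact_ball_cover K r HK) as [l Hl]; [intros z _; apply Hr|].
  exists (list_min r l). split; [apply list_min_pos; intros z _; apply Hr|].
  intros z t Kz Kt Hzt.
  destruct (Hl z Kz) as [y [Hy [Ky Hyz]]].
  pose proof (list_min_le r l y Hy). pose proof (Cdist_triangle y z t).
  destruct (Hr y) as [Hry Hc].
  pose proof (Hc Ky z Kz ltac:(lra)) as H1. pose proof (Hc Ky t Kt ltac:(lra)) as H2.
  replace (f z - f t) with (-(f y - f z) + (f y - f t)) by ring.
  pose proof (Rabs_triang (-(f y - f z)) (f y - f t)). rewrite Rabs_Ropp in *. lra.
Qed.

Lemma compact_bounded (K : Cx -> Prop) (f : Cx -> R) :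
  compactC K -> continuous_onC K f -> exists M, forall z, K z -> Rabs (f z) <= M.
Proof.
  intros HK Hf.
  destruct (compact_unif_cont K f HK Hf 1 ltac:(lra)) as [d [Hd Hu]].
  destruct (compact_ball_cover K (fun _ => d) HK) as [l Hl]; [intros; lra|].
  exists (1 + fold_right Rmax 0 (map (fun z => Rabs (f z)) l)).
  intros t Kt. destruct (Hl t Kt) as [y [Hy [Ky Hyt]]].
  assert (Hmax : Rabs (f y) <= fold_right Rmax 0 (map (fun z => Rabs (f z)) l)).
  { clear Hl. induction l as [|x l IH]; simpl in *; [tauto|].
    destruct Hy as [<-|Hy]; [apply Rmax_l|].
    eapply Rle_trans; [apply IH; auto | apply Rmax_r]. }
  pose proof (Hu y t Ky Kt Hyt).
  pose proof (Rabs_triang_inv (f t) (f y)). rewrite (Rabs_minus_sym (f y)) in *. lra.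
Qed.

Lemma compact_dist_pos (K : Cx -> Prop) (a : Cx) :
  compactC K -> (forall z, K z -> z <> a) ->
  exists d, 0 < d /\ forall z, K z -> d <= Cdist a z.
Proof.
  intros HK Ha.
  assert (Hpos : forall z, K z -> 0 < Cdist a z)
    by (intros z Kz; apply Cdist_pos; intros e; apply (Ha z Kz); auto).
  destruct (choose_radius K (fun z d => d = Cdist a z / 2)) as [r Hr].
  { intros z Kz. exists (Cdist a z / 2). split; auto. pose proof (Hpos z Kz). lra. }
  destruct (compact_ball_cover K r HK) as [l Hl]; [intros z _; apply Hr|].
  exists (list_min r l). split; [apply list_min_pos; intros z _; apply Hr|].
  intros t Kt. destruct (Hl t Kt) as [y [Hy [Ky Hyt]]].
  pose proof (list_min_le r l y Hy). destruct (Hr y) as [_ Hry]. rewrite (Hry Ky) in *.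
  pose proof (Cdist_triangle a t y). rewrite (Cdist_sym t y) in *. lra.
Qed.

Definition infinite_real_set (P : R -> Prop) : Prop :=
  ~ exists l : list R, forall x, P x -> In x l.

Lemma infinite_real_set_mono (P Q : R -> Prop) :
  (forall x, P x -> Q x) -> infinite_real_set P -> infinite_real_set Q.
Proof. intros H HP [l Hl]. apply HP. exists l. auto. Qed.

Lemma infinite_real_set_diff (P Q : R -> Prop) :
  infinite_real_set P -> (exists l, forall x, Q x -> In x l) ->
  infinite_real_set (fun x => P x /\ ~ Q x).
Proof.
  intros HP [l2 H2] [l1 H1]. apply HP. exists (l1 ++ l2). intros x Px.
  apply in_or_app. destruct (classic (Q x)); auto.
Qed.

Lemma infinite_real_set_avoid (P : R -> Prop) (x0 : R) :
  infinite_real_set P -> exists x, P x /\ x <> x0.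
Proof.
  intros HP. apply NNPP. intros Hn. apply HP. exists (x0 :: nil). intros x Px.
  destruct (Req_dec x x0) as [e|e]; [left; auto|]. exfalso. apply Hn. eauto.
Qed.

(* Bolzano-Weierstrass on [-1, 1]: the supremum of the thresholds t above
   which X is still infinite is an accumulation point of X. *)
Lemma real_accumulation_point (X : R -> Prop) :
  (forall x, X x -> -1 <= x <= 1) -> infinite_real_set X ->
  exists x0, -1 <= x0 <= 1 /\
    forall rho, 0 < rho -> exists x, X x /\ x <> x0 /\ Rabs (x - x0) < rho.
Proof.
  intros HX Hinf.
  set (S := fun t => infinite_real_set (fun x => X x /\ t <= x)).
  assert (Sb : forall t, S t -> t <= 1).
  { intros t St. destruct (Rle_dec t 1) as [h|h]; auto. exfalso. apply St. exists nil.
    intros x [Xx Hx]. apply HX in Xx. lra. }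
  assert (Sm1 : S (-1)).
  { apply (infinite_real_set_mono X); auto. intros x Xx. split; auto. apply HX in Xx. lra. }
  destruct (completeness S) as [x0 [Hub Hlub]]; [exists 1; exact Sb | exists (-1); exact Sm1|].
  exists x0. split; [split; [apply Hub; auto | apply Hlub; exact Sb]|].
  intros rho Hrho.
  assert (Ht : exists t, S t /\ x0 - rho < t).
  { apply NNPP. intros Hn. assert (x0 <= x0 - rho); [|lra]. apply Hlub.
    intros t St. destruct (Rle_dec t (x0 - rho)) as [h|h]; auto. exfalso. apply Hn.
    exists t. split; auto. lra. }
  destruct Ht as [t [St Ht]].
  assert (Hfin : ~ S (x0 + rho / 2)) by (intros H; pose proof (Hub _ H); lra).
  apply NNPP in Hfin.
  destruct (infinite_real_set_avoid _ x0 (infinite_real_set_diff _ _ St Hfin))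
    as [x [[[Xx Hx1] Hx2] Hx3]].
  exists x. split; auto. split; auto.
  assert (x < x0 + rho / 2) by (apply Rnot_le_lt; intros Hle; apply Hx2; split; auto; lra).
  apply Rabs_def1; lra.
Qed.

Definition half_circle_point (s x : R) : Cx := (x, s * sqrt (1 - x ^ 2)).

Lemma half_circle_point_on_circle s x :
  s * s = 1 -> -1 <= x <= 1 -> unit_circle (half_circle_point s x).
Proof.
  intros Hs Hx. unfold unit_circle, half_circle_point, Re, Im; simpl.
  replace ((s * sqrt (1 - x * (x * 1))) * ((s * sqrt (1 - x * (x * 1))) * 1))
    with ((s * s) * (sqrt (1 - x * (x * 1)) * sqrt (1 - x * (x * 1)))) by ring.
  rewrite sqrt_sqrt by nra. rewrite Hs. ring.
Qed.

Lemma half_circle_point_eq (w : Cx) (s : R) :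
  unit_circle w -> s * s = 1 -> 0 <= s * snd w -> w = half_circle_point s (fst w).
Proof.
  intros Hw Hs Hp. unfold unit_circle, Re, Im in Hw. destruct w as [w1 w2].
  unfold half_circle_point; cbn [fst snd] in *. f_equal.
  replace (1 - w1 ^ 2) with (Rsqr w2) by (unfold Rsqr; lra). rewrite sqrt_Rsqr_abs.
  assert (s = 1 \/ s = -1) as [->| ->] by (destruct (Rle_dec 0 s); nra).
  - rewrite Rabs_right; lra.
  - rewrite Rabs_left1; lra.
Qed.

Lemma sqrt_diff_sq p q : 0 <= p -> 0 <= q -> (sqrt p - sqrt q) ^ 2 <= Rabs (p - q).
Proof.
  intros Hp Hq. pose proof (sqrt_pos p). pose proof (sqrt_pos q).
  pose proof (sqrt_sqrt p Hp). pose proof (sqrt_sqrt q Hq).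
  set (a := sqrt p) in *. set (b := sqrt q) in *.
  replace (p - q) with ((a - b) * (a + b)) by (rewrite <- H1, <- H2; ring).
  rewrite Rabs_mult, (Rabs_right (a + b)) by lra.
  destruct (Rle_dec a b); [rewrite Rabs_left1 by lra | rewrite Rabs_right by lra]; nra.
Qed.

Lemma half_circle_point_sqdist s x x' :
  s * s = 1 -> -1 <= x <= 1 -> -1 <= x' <= 1 -> Rabs (x - x') <= 1 ->
  sqdist (half_circle_point s x) (half_circle_point s x') <= 3 * Rabs (x - x').
Proof.
  intros Hs Hx Hx' H1. unfold sqdist, half_circle_point; cbn [fst snd].
  replace ((s * sqrt (1 - x ^ 2) - s * sqrt (1 - x' ^ 2)) ^ 2)
    with ((s * s) * (sqrt (1 - x ^ 2) - sqrt (1 - x' ^ 2)) ^ 2) by ring.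
  rewrite Hs, Rmult_1_l.
  pose proof (sqrt_diff_sq (1 - x ^ 2) (1 - x' ^ 2) ltac:(nra) ltac:(nra)) as Hd.
  replace (1 - x ^ 2 - (1 - x' ^ 2)) with ((x' - x) * (x' + x)) in Hd by ring.
  rewrite Rabs_mult, (Rabs_minus_sym x') in Hd.
  assert (Rabs (x' + x) <= 2) by (apply Rabs_le; lra).
  rewrite <- (pow2_abs (x - x')). pose proof (Rabs_pos (x - x')). nra.
Qed.

Lemma half_circle_accumulation (E : Cx -> Prop) (s : R) :
  s * s = 1 -> (forall z, E z -> unit_circle z) ->
  infinite_set (fun w => E w /\ 0 <= s * snd w) ->
  exists a, unit_circle a /\
    forall rho, 0 < rho -> exists w, E w /\ w <> a /\ Cdist a w < rho.
Proof.
  intros Hs hE Hinf.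
  set (X := fun x => exists w, (E w /\ 0 <= s * snd w) /\ fst w = x).
  assert (HX : forall x, X x -> -1 <= x <= 1).
  { intros x [w [[Ew _] <-]]. apply hE in Ew. unfold unit_circle, Re, Im in Ew.
    pose proof (pow2_ge_0 (snd w)). split; nra. }
  assert (Hi : infinite_real_set X).
  { intros [l Hl]. apply Hinf. exists (map (half_circle_point s) l).
    intros w [Ew Hw]. apply in_map_iff. exists (fst w).
    split; [symmetry; apply half_circle_point_eq; auto | apply Hl; exists w; auto]. }
  destruct (real_accumulation_point X HX Hi) as [x0 [Hx0 Hacc]].
  exists (half_circle_point s x0). split; [apply half_circle_point_on_circle; auto|].
  intros rho Hrho.
  destruct (Hacc (Rmin 1 (rho ^ 2 / 3))) as [x [[w [[Ew Hsw] Hwx]] [Hne Hxx]]].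
  { apply Rmin_glb_lt; nra. }
  pose proof (Rmin_l 1 (rho ^ 2 / 3)). pose proof (Rmin_r 1 (rho ^ 2 / 3)).
  assert (Hw : w = half_circle_point s x) by (rewrite <- Hwx; apply half_circle_point_eq; auto).
  exists w. split; auto. split.
  { rewrite Hw. intros e. apply Hne. unfold half_circle_point in e. congruence. }
  apply Cdist_lt_iff; [lra|]. rewrite Hw.
  pose proof (half_circle_point_sqdist s x0 x Hs Hx0 (HX x ltac:(exists w; auto))).
  rewrite Rabs_minus_sym in Hxx. nra.
Qed.

Lemma circle_accumulation (E : Cx -> Prop) :
  (forall z, E z -> unit_circle z) -> infinite_set E ->
  exists a, unit_circle a /\
    forall rho, 0 < rho -> exists w, E w /\ w <> a /\ Cdist a w < rho.
Proof.
  intros hE Hinf.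
  destruct (classic (infinite_set (fun w => E w /\ 0 <= 1 * snd w))) as [H1|H1].
  { apply (half_circle_accumulation E 1); auto; lra. }
  destruct (classic (infinite_set (fun w => E w /\ 0 <= -1 * snd w))) as [H2|H2].
  { apply (half_circle_accumulation E (-1)); auto; lra. }
  exfalso. apply NNPP in H1, H2. destruct H1 as [l1 H1], H2 as [l2 H2].
  apply Hinf. exists (l1 ++ l2). intros z Ez. apply in_or_app.
  destruct (Rle_dec 0 (snd z)); [left; apply H1 | right; apply H2]; split; auto; lra.
Qed.

(* The rotated Herglotz kernel i (w + z) / (w - z) and its real part [hk w z];
   each term of the sums [rfun] contributes [c_k * hk (w k) z] to the real part. *)
Definition ikernel (w z : Cx) : Cx := Cmult Ci (Cdiv (Cplus w z) (Cminus w z)).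
Definition hk (w z : Cx) : R := Re (ikernel w z).

Lemma hk_formula w z : sqdist w z <> 0 ->
  hk w z = 2 * (snd w * fst z - fst w * snd z) / sqdist w z.
Proof.
  intros H. unfold hk, ikernel, sqdist in *. destruct w as [w1 w2], z as [z1 z2].
  unfold Cmult, Cdiv, Cinv, Cplus, Cminus, Ci, Re, Im; simpl in *.
  field; intro HH; apply H; rewrite <- HH; ring.
Qed.

Lemma ikernel_real w z : w <> z -> unit_circle w -> unit_circle z -> Im (ikernel w z) = 0.
Proof.
  intros H Hw Hz. pose proof (sqdist_neq0 w z H) as Hd. unfold sqdist, unit_circle in *.
  destruct w as [w1 w2], z as [z1 z2].
  unfold ikernel, Cmult, Cdiv, Cinv, Cplus, Cminus, Ci, Re, Im in *; simpl in *.
  unfold Rdiv. generalize (/ ((w1 - z1) * ((w1 - z1) * 1) + (w2 - z2) * ((w2 - z2) * 1))); intro I.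
  assert (Z : (w1 + z1) * (w1 - z1) + (w2 + z2) * (w2 - z2) = 0) by nra.
  transitivity (((w1 + z1) * (w1 - z1) + (w2 + z2) * (w2 - z2)) * I); [ring | rewrite Z; ring].
Qed.

Lemma ikernel_addition (a w z : Cx) : a <> z -> a <> w -> w <> z ->
  Cmult (ikernel w z) (Cminus (ikernel a w) (ikernel a z))
  = Cplus (Cmult (ikernel a z) (ikernel a w)) (RtoC 1).
Proof.
  intros H1 H2 H3. pose proof (sqdist_neq0 _ _ H1). pose proof (sqdist_neq0 _ _ H2).
  pose proof (sqdist_neq0 _ _ H3). unfold sqdist in *.
  destruct a as [a1 a2], w as [w1 w2], z as [z1 z2].
  unfold ikernel, Cmult, Cdiv, Cinv, Cplus, Cminus, Ci, Re, Im, RtoC in *; simpl in *.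
  f_equal; field; repeat split; intro HH;
    [apply H0 | apply H | apply H4 | apply H0 | apply H | apply H4]; rewrite <- HH; ring.
Qed.

Lemma hk_addition (a w z : Cx) : unit_circle a -> unit_circle w -> unit_circle z ->
  a <> z -> a <> w -> w <> z ->
  hk w z * (hk a w - hk a z) = hk a z * hk a w + 1.
Proof.
  intros Ca Cw Cz H1 H2 H3.
  pose proof (f_equal Re (ikernel_addition a w z H1 H2 H3)) as K.
  pose proof (ikernel_real w z H3 Cw Cz) as I1.
  pose proof (ikernel_real a z H1 Ca Cz) as I2.
  pose proof (ikernel_real a w H2 Ca Cw) as I3.
  unfold hk. revert K I1 I2 I3.
  destruct (ikernel w z) as [x1 x2], (ikernel a z) as [y1 y2], (ikernel a w) as [t1 t2].
  unfold Cmult, Cminus, Cplus, RtoC, Re, Im; simpl. intros K -> -> ->. nra.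
Qed.

(* u = hk a z is the Cayley coordinate of z: u (a - z) = i (a + z) componentwise. *)
Lemma hk_cayley (a z : Cx) : unit_circle a -> unit_circle z -> a <> z ->
  hk a z * (fst a - fst z) = - (snd a + snd z) /\ hk a z * (snd a - snd z) = fst a + fst z.
Proof.
  intros Ca Cz H. pose proof (sqdist_neq0 _ _ H) as Hd.
  assert (K : Cmult (ikernel a z) (Cminus a z) = Cmult Ci (Cplus a z)).
  { unfold sqdist in Hd. destruct a as [a1 a2], z as [z1 z2].
    unfold ikernel, Cmult, Cdiv, Cinv, Cplus, Cminus, Ci, Re, Im in *; simpl in *.
    f_equal; field; intro HH; apply Hd; rewrite <- HH; ring. }
  pose proof (ikernel_real a z H Ca Cz) as I. unfold hk. revert K I.
  destruct (ikernel a z) as [y1 y2], a as [a1 a2], z as [z1 z2].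
  unfold Cmult, Cminus, Cplus, Ci, Re, Im; simpl. intros K ->.
  injection K. intros K2 K1. split; lra.
Qed.

(* The inverse Cayley transform: the point of the circle with coordinate u relative to a. *)
Definition cayley_inv (a : Cx) (u : R) : Cx :=
  ((fst a * (u ^ 2 - 1) + 2 * u * snd a) / (u ^ 2 + 1),
   (snd a * (u ^ 2 - 1) - 2 * u * fst a) / (u ^ 2 + 1)).

Lemma cayley_inv_hk (a z : Cx) : unit_circle a -> unit_circle z -> a <> z ->
  z = cayley_inv a (hk a z).
Proof.
  intros Ca Cz H. destruct (hk_cayley a z Ca Cz H) as [E1 E2].
  revert E1 E2. generalize (hk a z) as u. intros u E1 E2.
  assert (Pu : 0 < u ^ 2 + 1) by (pose proof (pow2_ge_0 u); lra).
  destruct a as [a1 a2], z as [z1 z2]. unfold cayley_inv; cbn [fst snd] in *.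
  f_equal; apply (Rmult_eq_reg_r (u ^ 2 + 1)); try lra;
    unfold Rdiv; rewrite Rmult_assoc, Rinv_l by lra; nra.
Qed.

Lemma cayley_inv_sqdist (a : Cx) (u v : R) : unit_circle a ->
  sqdist (cayley_inv a u) (cayley_inv a v) <= 4 * (u - v) ^ 2.
Proof.
  intros Ca. unfold unit_circle, Re, Im in Ca.
  assert (Pu : 0 < u ^ 2 + 1) by (pose proof (pow2_ge_0 u); lra).
  assert (Pv : 0 < v ^ 2 + 1) by (pose proof (pow2_ge_0 v); lra).
  assert (EQ : sqdist (cayley_inv a u) (cayley_inv a v)
               = (fst a ^ 2 + snd a ^ 2) * (4 * (u - v) ^ 2 / ((u ^ 2 + 1) * (v ^ 2 + 1)))).
  { unfold sqdist, cayley_inv; cbn [fst snd]. field; lra. }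
  rewrite EQ, Ca, Rmult_1_l. unfold Rdiv.
  assert (1 <= (u ^ 2 + 1) * (v ^ 2 + 1)) by (pose proof (pow2_ge_0 u); pose proof (pow2_ge_0 v); nra).
  assert (0 < / ((u ^ 2 + 1) * (v ^ 2 + 1)) <= 1).
  { split; [apply Rinv_0_lt_compat; lra|]. rewrite <- Rinv_1. apply Rinv_le_contravar; lra. }
  pose proof (pow2_ge_0 (u - v)). nra.
Qed.

Lemma hk_inverse_lipschitz (a z t : Cx) : unit_circle a -> unit_circle z -> unit_circle t ->
  a <> z -> a <> t -> Cdist z t <= 2 * Rabs (hk a z - hk a t).
Proof.
  intros Ca Cz Ct Hz Ht. pose proof (Rabs_pos (hk a z - hk a t)).
  apply Cdist_le_iff; [lra|].
  rewrite (cayley_inv_hk a z), (cayley_inv_hk a t) at 1 by auto.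
  replace ((2 * Rabs (hk a z - hk a t)) ^ 2) with (4 * (hk a z - hk a t) ^ 2)
    by (rewrite <- (pow2_abs (hk a z - hk a t)); ring).
  apply cayley_inv_sqdist; auto.
Qed.

Lemma hk_sq (a w : Cx) : unit_circle a -> unit_circle w -> a <> w ->
  hk a w ^ 2 = 4 / sqdist a w - 1.
Proof.
  intros Ca Cw H. pose proof (sqdist_neq0 _ _ H) as Hn. rewrite hk_formula by auto.
  unfold unit_circle, Re, Im, sqdist in *.
  assert (Q : 4 * (snd a * fst w - fst a * snd w) ^ 2
              = ((fst a - fst w) ^ 2 + (snd a - snd w) ^ 2)
                * (4 - ((fst a - fst w) ^ 2 + (snd a - snd w) ^ 2))).
  { transitivity (4 * ((fst a ^ 2 + snd a ^ 2) * (fst w ^ 2 + snd w ^ 2)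
                       - (fst a * fst w + snd a * snd w) ^ 2)); [ring|].
    rewrite Ca, Cw. nra. }
  apply (Rmult_eq_reg_r (((fst a - fst w) ^ 2 + (snd a - snd w) ^ 2) ^ 2)).
  - transitivity (4 * (snd a * fst w - fst a * snd w) ^ 2); [field; auto|].
    rewrite Q. field; auto.
  - apply pow_nonzero; auto.
Qed.

Lemma hk_bound (a z : Cx) (d : R) : unit_circle a -> unit_circle z -> a <> z ->
  0 < d -> d <= Cdist a z -> Rabs (hk a z) <= 2 / d.
Proof.
  intros Ca Cz H Hd Hdist. pose proof (hk_sq a z Ca Cz H) as Hsq.
  assert (Hn : d ^ 2 <= sqdist a z) by (rewrite <- Cdist_sq; apply pow_incr; lra).
  assert (Hsq' : Rabs (hk a z) ^ 2 <= (2 / d) ^ 2).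
  { rewrite pow2_abs, Hsq. replace ((2 / d) ^ 2) with (4 / d ^ 2) by (field; lra).
    assert (4 / sqdist a z <= 4 / d ^ 2); [|lra].
    apply Rmult_le_compat_l; [lra|]. apply Rinv_le_contravar; auto. apply pow_lt; lra. }
  pose proof (Rabs_pos (hk a z)). assert (0 < 2 / d) by (apply Rdiv_lt_0_compat; lra). nra.
Qed.

Lemma hk_large (a w : Cx) (B : R) : unit_circle a -> unit_circle w -> a <> w -> 0 <= B ->
  Cdist a w < / (B + 1) -> B < Rabs (hk a w).
Proof.
  intros Ca Cw H HB Hd. pose proof (hk_sq a w Ca Cw H) as Hsq.
  pose proof (sqdist_neq0 _ _ H). pose proof (sqdist_nonneg a w).
  assert (Hr : 0 < / (B + 1)) by (apply Rinv_0_lt_compat; lra).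
  apply Cdist_lt_iff in Hd; [|lra].
  assert (Hn : sqdist a w * (B + 1) ^ 2 < 1).
  { assert (E1 : (/ (B + 1)) ^ 2 * (B + 1) ^ 2 = 1) by (field; lra).
    apply Rlt_le_trans with ((/ (B + 1)) ^ 2 * (B + 1) ^ 2); [|lra].
    apply Rmult_lt_compat_r; [apply pow_lt|]; lra. }
  assert (Hbig : B ^ 2 < hk a w ^ 2).
  { rewrite Hsq. assert ((B + 1) ^ 2 < 1 / sqdist a w).
    { apply (Rmult_lt_reg_r (sqdist a w)); [lra|].
      unfold Rdiv; rewrite Rmult_assoc, Rinv_l; lra. }
    assert (B ^ 2 < 4 * (B + 1) ^ 2 - 1) by nra.
    unfold Rdiv in *. lra. }
  rewrite <- (pow2_abs (hk a w)) in Hbig. destruct (Rlt_le_dec B (Rabs (hk a w))) as [|Hle]; auto.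
  pose proof (pow_incr _ _ 2 (conj (Rabs_pos (hk a w)) Hle)). lra.
Qed.

(* The Bernstein basis polynomials bern n k y = C(n,k) y^k (1-y)^(n-k),
   defined through their Pascal-type recursion. *)
Fixpoint bern (n k : nat) (y : R) : R :=
  match n, k with
  | O, O => 1
  | O, S _ => 0
  | S m, O => (1 - y) * bern m O y
  | S m, S j => y * bern m j y + (1 - y) * bern m (S j) y
  end.

Lemma bern_nonneg n k y : 0 <= y <= 1 -> 0 <= bern n k y.
Proof.
  intros Hy. revert k. induction n; intros k; destruct k; simpl; try lra.
  - pose proof (IHn O). nra.
  - pose proof (IHn k). pose proof (IHn (S k)). nra.
Qed.

Lemma bern_high n k y : (n < k)%nat -> bern n k y = 0.
Proof.
  revert k. induction n; intros k Hk; destruct k; simpl; try lia; auto.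
  rewrite !IHn by lia. ring.
Qed.

Lemma sum_f_R0_shift f N : sum_f_R0 f (S N) = f O + sum_f_R0 (fun k => f (S k)) N.
Proof. induction N; simpl in *; [reflexivity | rewrite IHN; ring]. Qed.

Lemma sum_f_R0_lin f g al be N :
  sum_f_R0 (fun k => al * f k + be * g k) N = al * sum_f_R0 f N + be * sum_f_R0 g N.
Proof. induction N; simpl; [ring | rewrite IHN; ring]. Qed.

(* The first two moments of the Bernstein basis, in one identity:
   sum_k (al + be (k - c)^2) bern n k y = al + be (n y (1 - y) + (n y - c)^2). *)
Lemma bern_moments n al be c y :
  sum_f_R0 (fun k => (al + be * (INR k - c) ^ 2) * bern n k y) n
  = al + be * (INR n * y * (1 - y) + (INR n * y - c) ^ 2).
Proof.
  revert c. induction n; intros c; [simpl; ring|].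
  set (g := fun c k => al + be * (INR k - c) ^ 2).
  change (sum_f_R0 (fun k => g c k * bern (S n) k y) (S n)
          = al + be * (INR (S n) * y * (1 - y) + (INR (S n) * y - c) ^ 2)).
  transitivity ((1 - y) * sum_f_R0 (fun k => g c k * bern n k y) (S n)
                + y * sum_f_R0 (fun k => g (c - 1) k * bern n k y) n).
  - rewrite sum_f_R0_shift. cbn [bern]. rewrite sum_f_R0_shift.
    rewrite (sum_eq (fun k => g c (S k) * (y * bern n k y + (1 - y) * bern n (S k) y))
                    (fun k => y * (g (c - 1) k * bern n k y)
                              + (1 - y) * (g c (S k) * bern n (S k) y))).
    + rewrite sum_f_R0_lin. ring.
    + intros i _. unfold g. rewrite S_INR. ring.
  - simpl sum_f_R0 at 1. rewrite bern_high by lia. unfold g. rewrite !IHn, S_INR. ring.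
Qed.

Lemma bern_sum_one n y : sum_f_R0 (fun k => bern n k y) n = 1.
Proof.
  rewrite (sum_eq _ (fun k => (1 + 0 * (INR k - 0) ^ 2) * bern n k y)) by (intros; ring).
  rewrite bern_moments. ring.
Qed.

Lemma choose_witnesses {T : Type} (K : T -> Prop) (Q : nat -> T -> Prop) :
  (exists z0, K z0) ->
  exists p : nat -> T, forall k, K (p k) /\ forall q, K q -> Q k q -> Q k (p k).
Proof.
  intros [z0 Kz0].
  assert (Hex : forall k, exists p, K p /\ forall q, K q -> Q k q -> Q k p).
  { intros k. destruct (classic (exists q, K q /\ Q k q)) as [[q [Kq Hq]]|Hn].
    - exists q. auto.
    - exists z0. split; auto. intros q Kq Hq. exfalso; eauto. }
  exists (fun k => proj1_sig (constructive_indefinite_description _ (Hex k))).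
  intros k. destruct (constructive_indefinite_description _ (Hex k)) as [p Hp]. exact Hp.
Qed.

Section Bernstein.
Variables (T : Type) (K : T -> Prop) (y f : T -> R) (Mf delta eps : R).
Hypothesis hdelta : 0 < delta.
Hypothesis heps : 0 < eps.
Hypothesis hy : forall z, K z -> 0 <= y z <= 1.
Hypothesis hf : forall z, K z -> Rabs (f z) <= Mf.
Hypothesis hfy : forall z t, K z -> K t -> Rabs (y z - y t) < delta -> Rabs (f z - f t) < eps / 2.

(* If the node p is within delta/2 of k / n (in the coordinate y) whenever z
   is, then f p is eps/2-close to f z, up to a quadratic penalty in the
   distance from n y z to k; the penalty is controlled by the second moment. *)
Lemma bernstein_term_bound n k p z : 0 < INR n -> K z -> K p ->
  (Rabs (y z - INR k / INR n) < delta / 2 -> Rabs (y p - INR k / INR n) < delta / 2) ->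
  Rabs (f p - f z) <= eps / 2 + 8 * Mf / (delta ^ 2 * INR n ^ 2) * (INR k - INR n * y z) ^ 2.
Proof.
  intros Hn Kz Kp Hnode. set (x := INR k / INR n) in *.
  assert (HMf : 0 <= Mf) by (pose proof (hf z Kz); pose proof (Rabs_pos (f z)); lra).
  assert (Hpen : 0 <= 8 * Mf / (delta ^ 2 * INR n ^ 2) * (INR k - INR n * y z) ^ 2).
  { apply Rmult_le_pos; [|apply pow2_ge_0]. apply Rmult_le_pos; [lra|].
    left; apply Rinv_0_lt_compat, Rmult_lt_0_compat; apply pow_lt; lra. }
  destruct (Rlt_le_dec (Rabs (y z - x)) (delta / 2)) as [Hc|Hc].
  - assert (Hyp : Rabs (y p - y z) < delta).
    { replace (y p - y z) with ((y p - x) + (x - y z)) by ring.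
      pose proof (Rabs_triang (y p - x) (x - y z)). rewrite (Rabs_minus_sym x) in *.
      pose proof (Hnode Hc). lra. }
    pose proof (hfy p z Kp Kz Hyp). lra.
  - assert (Hfar : (delta / 2) ^ 2 <= (y z - x) ^ 2)
      by (rewrite <- (pow2_abs (y z - x)); apply pow_incr; lra).
    assert (Hpen2 : 2 * Mf <= 8 * Mf / (delta ^ 2 * INR n ^ 2) * (INR k - INR n * y z) ^ 2).
    { replace (8 * Mf / (delta ^ 2 * INR n ^ 2) * (INR k - INR n * y z) ^ 2)
        with (2 * Mf * ((y z - x) ^ 2 / (delta / 2) ^ 2)) by (unfold x; field; lra).
      assert (1 <= (y z - x) ^ 2 / (delta / 2) ^ 2); [|nra].
      apply (Rmult_le_reg_r ((delta / 2) ^ 2)); [apply pow_lt; lra|].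
      replace ((y z - x) ^ 2 / (delta / 2) ^ 2 * (delta / 2) ^ 2) with ((y z - x) ^ 2)
        by (field; lra). lra. }
    pose proof (hf p Kp). pose proof (hf z Kz).
    pose proof (Rabs_triang (f p) (- f z)). rewrite Rabs_Ropp in *. unfold Rminus. lra.
Qed.

(* Summing the term bounds against the Bernstein weights: the first moment
   kills the linear part and the variance n y (1 - y) <= n / 4 bounds the rest. *)
Lemma bernstein_error_bound n (p : nat -> T) z : 0 < INR n -> K z ->
  (forall k, K (p k) /\ forall q, K q ->
     Rabs (y q - INR k / INR n) < delta / 2 -> Rabs (y (p k) - INR k / INR n) < delta / 2) ->
  Rabs (sum_f_R0 (fun k => f (p k) * bern n k (y z)) n - f z)
  <= eps / 2 + 2 * Mf / (delta ^ 2 * INR n).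
Proof.
  intros Hn Kz Hp. pose proof (hy z Kz) as Hyz.
  set (be := 8 * Mf / (delta ^ 2 * INR n ^ 2)).
  assert (HMf : 0 <= Mf) by (pose proof (hf z Kz); pose proof (Rabs_pos (f z)); lra).
  assert (Hdiff : sum_f_R0 (fun k => f (p k) * bern n k (y z)) n - f z
                  = sum_f_R0 (fun k => (f (p k) - f z) * bern n k (y z)) n).
  { rewrite (sum_eq (fun k => (f (p k) - f z) * bern n k (y z))
                    (fun k => 1 * (f (p k) * bern n k (y z)) + (- f z) * bern n k (y z)))
      by (intros; ring).
    rewrite sum_f_R0_lin, bern_sum_one. ring. }
  rewrite Hdiff. eapply Rle_trans; [apply sum_f_R0_triangle|].
  eapply Rle_trans.
  { apply (sum_Rle _ (fun k => (eps / 2 + be * (INR k - INR n * y z) ^ 2) * bern n k (y z))).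
    intros k _. rewrite Rabs_mult, (Rabs_right (bern n k (y z)))
      by (apply Rle_ge, bern_nonneg; auto).
    apply Rmult_le_compat_r; [apply bern_nonneg; auto|].
    destruct (Hp k) as [Kp Hnode].
    apply bernstein_term_bound; auto. intros Hc. apply (Hnode z Kz Hc). }
  rewrite bern_moments. replace ((INR n * y z - INR n * y z) ^ 2) with 0 by ring.
  assert (Hbe : 0 <= be).
  { unfold be. apply Rmult_le_pos; [lra|].
    left; apply Rinv_0_lt_compat, Rmult_lt_0_compat; apply pow_lt; lra. }
  assert (Hvar : INR n * y z * (1 - y z) <= INR n / 4)
    by (pose proof (pow2_ge_0 (y z - 1 / 2)); nra).
  replace (2 * Mf / (delta ^ 2 * INR n)) with (be * (INR n / 4)) by (unfold be; field; lra).
  nra.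
Qed.

Theorem bernstein_approx : (exists z0, K z0) ->
  exists (n : nat) (p : nat -> T), (forall k, K (p k)) /\ forall z, K z ->
    Rabs (sum_f_R0 (fun k => f (p k) * bern n k (y z)) n - f z) < eps.
Proof.
  intros [z0 Kz0].
  assert (HMf : 0 <= Mf) by (pose proof (hf z0 Kz0); pose proof (Rabs_pos (f z0)); lra).
  assert (Hde : 0 < delta ^ 2 * eps) by (apply Rmult_lt_0_compat; [apply pow_lt|]; lra).
  destruct (INR_archimed 1 (4 * Mf / (delta ^ 2 * eps))) as [n0 Hn0]; [lra|].
  set (n := S n0). assert (Hn : 0 < INR n) by (apply lt_0_INR; unfold n; lia).
  assert (Hsmall : 2 * Mf / (delta ^ 2 * INR n) < eps / 2).
  { assert (Hnbig : 4 * Mf < INR n * (delta ^ 2 * eps)).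
    { apply (Rmult_lt_compat_r (delta ^ 2 * eps)) in Hn0; [|lra].
      replace (4 * Mf / (delta ^ 2 * eps) * (delta ^ 2 * eps)) with (4 * Mf) in Hn0
        by (field; lra).
      unfold n; rewrite S_INR. nra. }
    apply (Rmult_lt_reg_r (2 * (delta ^ 2 * INR n))); [nra|].
    replace (2 * Mf / (delta ^ 2 * INR n) * (2 * (delta ^ 2 * INR n))) with (4 * Mf)
      by (field; split; lra).
    lra. }
  destruct (choose_witnesses K (fun k q => Rabs (y q - INR k / INR n) < delta / 2))
    as [p Hp]; [eauto|].
  exists n, p. split; [intros k; apply Hp|]. intros z Kz.
  pose proof (bernstein_error_bound n p z Hn Kz Hp). lra.
Qed.

End Bernstein.

Fixpoint hk_sum (n : nat) (c : nat -> R) (w : nat -> Cx) (z : Cx) : R :=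
  match n with O => 0 | S m => hk_sum m c w z + c n * hk (w n) z end.

Lemma hk_sum_ext n c c' w w' z :
  (forall k, (1 <= k <= n)%nat -> c k = c' k /\ w k = w' k) ->
  hk_sum n c w z = hk_sum n c' w' z.
Proof.
  induction n; simpl; intros H; auto.
  destruct (H (S n)) as [-> ->]; [lia|]. rewrite IHn; auto. intros k Hk; apply H; lia.
Qed.

Lemma hk_sum_scal n c w z l : hk_sum n (fun k => l * c k) w z = l * hk_sum n c w z.
Proof. induction n; simpl; [ring | rewrite IHn; ring]. Qed.

Definition concat_fam {X : Type} (n1 : nat) (f1 f2 : nat -> X) : nat -> X :=
  fun k => if (k <=? n1)%nat then f1 k else f2 (k - n1)%nat.

Lemma hk_sum_concat n1 n2 c1 c2 w1 w2 z :
  hk_sum (n1 + n2) (concat_fam n1 c1 c2) (concat_fam n1 w1 w2) z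
  = hk_sum n1 c1 w1 z + hk_sum n2 c2 w2 z.
Proof.
  induction n2.
  - rewrite Nat.add_0_r. simpl. rewrite Rplus_0_r. apply hk_sum_ext.
    intros k Hk. unfold concat_fam. replace (k <=? n1)%nat with true; auto.
    symmetry; apply Nat.leb_le; lia.
  - rewrite Nat.add_succ_r. simpl. rewrite IHn2. unfold concat_fam.
    replace (S (n1 + n2) <=? n1)%nat with false by (symmetry; apply Nat.leb_gt; lia).
    replace (S (n1 + n2) - n1)%nat with (S n2) by lia. ring.
Qed.

Section Approximable.
Variables (E K1 : Cx -> Prop).

Definition approximable (h : Cx -> R) : Prop := forall eps, 0 < eps ->
  exists n c0 c w, (forall k, (1 <= k <= n)%nat -> E (w k)) /\
    forall z, K1 z -> Rabs (c0 + hk_sum n c w z - h z) < eps.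

Lemma approx_ext h g : (forall z, K1 z -> h z = g z) -> approximable h -> approximable g.
Proof.
  intros H Ah eps Heps. destruct (Ah eps Heps) as [n [c0 [c [w [Hw Hz]]]]].
  exists n, c0, c, w. split; auto. intros z Kz. rewrite <- H; auto.
Qed.

Lemma approx_limit g :
  (forall eps, 0 < eps -> exists h, approximable h /\ forall z, K1 z -> Rabs (h z - g z) < eps) ->
  approximable g.
Proof.
  intros H eps Heps. destruct (H (eps / 2)) as [h [Ah Hh]]; [lra|].
  destruct (Ah (eps / 2)) as [n [c0 [c [w [Hw Hz]]]]]; [lra|].
  exists n, c0, c, w. split; auto. intros z Kz.
  pose proof (Hz z Kz). pose proof (Hh z Kz).
  replace (c0 + hk_sum n c w z - g z) with ((c0 + hk_sum n c w z - h z) + (h z - g z)) by ring.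
  pose proof (Rabs_triang (c0 + hk_sum n c w z - h z) (h z - g z)). lra.
Qed.

Lemma approx_const c0 : approximable (fun _ => c0).
Proof.
  intros eps Heps. exists O, c0, (fun _ => 0), (fun _ => (0, 0)). split; [intros; lia|].
  intros z _. simpl. replace (c0 + 0 - c0) with 0 by ring. rewrite Rabs_R0. auto.
Qed.

Lemma approx_hk w : E w -> approximable (hk w).
Proof.
  intros Ew eps Heps. exists 1%nat, 0, (fun _ => 1), (fun _ => w). split; [intros; auto|].
  intros z _. simpl. replace (0 + (0 + 1 * hk w z) - hk w z) with 0 by ring.
  rewrite Rabs_R0. auto.
Qed.

Lemma approx_add h1 h2 : approximable h1 -> approximable h2 ->
  approximable (fun z => h1 z + h2 z).
Proof.
  intros A1 A2 eps Heps.
  destruct (A1 (eps / 2)) as [n1 [c01 [c1 [w1 [Hw1 Hz1]]]]]; [lra|].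
  destruct (A2 (eps / 2)) as [n2 [c02 [c2 [w2 [Hw2 Hz2]]]]]; [lra|].
  exists (n1 + n2)%nat, (c01 + c02), (concat_fam n1 c1 c2), (concat_fam n1 w1 w2). split.
  - intros k Hk. unfold concat_fam. destruct (k <=? n1)%nat eqn:e.
    + apply Nat.leb_le in e. apply Hw1. lia.
    + apply Nat.leb_gt in e. apply Hw2. lia.
  - intros z Kz. rewrite hk_sum_concat. pose proof (Hz1 z Kz). pose proof (Hz2 z Kz).
    replace (c01 + c02 + (hk_sum n1 c1 w1 z + hk_sum n2 c2 w2 z) - (h1 z + h2 z))
      with ((c01 + hk_sum n1 c1 w1 z - h1 z) + (c02 + hk_sum n2 c2 w2 z - h2 z)) by ring.
    pose proof (Rabs_triang (c01 + hk_sum n1 c1 w1 z - h1 z) (c02 + hk_sum n2 c2 w2 z - h2 z)).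
    lra.
Qed.

Lemma approx_scal l h : approximable h -> approximable (fun z => l * h z).
Proof.
  intros Ah eps Heps. pose proof (Rabs_pos l).
  destruct (Ah (eps / (Rabs l + 1))) as [n [c0 [c [w [Hw Hz]]]]];
    [apply Rdiv_lt_0_compat; lra|].
  exists n, (l * c0), (fun k => l * c k), w. split; auto. intros z Kz.
  rewrite hk_sum_scal.
  replace (l * c0 + l * hk_sum n c w z - l * h z) with (l * (c0 + hk_sum n c w z - h z)) by ring.
  rewrite Rabs_mult. pose proof (Hz z Kz) as Hh.
  pose proof (Rabs_pos (c0 + hk_sum n c w z - h z)).
  apply (Rmult_lt_compat_r (Rabs l + 1)) in Hh; [|lra].
  unfold Rdiv in Hh. rewrite Rmult_assoc, Rinv_l, Rmult_1_r in Hh by lra. nra.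
Qed.

Lemma approx_lin al be h1 h2 : approximable h1 -> approximable h2 ->
  approximable (fun z => al * h1 z + be * h2 z).
Proof. intros. apply approx_add; apply approx_scal; auto. Qed.

Lemma approx_sum N (F : nat -> Cx -> R) : (forall k, (k <= N)%nat -> approximable (F k)) ->
  approximable (fun z => sum_f_R0 (fun k => F k z) N).
Proof.
  induction N; intros H; simpl; [apply H; lia|].
  apply approx_add; [apply IHN; intros; apply H; lia | apply H; lia].
Qed.

Lemma approx_bern (y : Cx -> R) :
  (forall h, approximable h -> approximable (fun z => y z * h z)) ->
  forall n k, approximable (fun z => bern n k (y z)).
Proof.
  intros Hy n. induction n; intros k; destruct k; simpl; try apply approx_const.
  - eapply approx_ext; [|apply (approx_lin 1 (-1) _ _ (IHn O) (Hy _ (IHn O)))].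
    intros; cbv beta; ring.
  - eapply approx_ext;
      [|apply (approx_add _ _ (Hy _ (IHn k)) (approx_lin 1 (-1) _ _ (IHn (S k)) (Hy _ (IHn (S k)))))].
    intros; cbv beta; ring.
Qed.

End Approximable.

Section Pole.
Variables (E K1 : Cx -> Prop) (a : Cx) (M : R).
Hypothesis hE : forall z, E z -> unit_circle z.
Hypothesis hK1 : forall z, K1 z -> unit_circle z.
Hypothesis ha : unit_circle a.
Hypothesis haK : forall z, K1 z -> a <> z.
Hypothesis hEK : forall w z, E w -> K1 z -> w <> z.
Hypothesis hacc : forall rho, 0 < rho -> exists w, E w /\ w <> a /\ Cdist a w < rho.
Hypothesis hM : 1 <= M.
Hypothesis hMb : forall z, K1 z -> Rabs (hk a z) <= M.

Let A := approximable E K1.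

Lemma pole_large_kernel B : 0 <= B -> exists w, E w /\ w <> a /\ B < Rabs (hk a w).
Proof.
  intros HB. destruct (hacc (/ (B + 1))) as [w [Ew [Hwa Hd]]]; [apply Rinv_0_lt_compat; lra|].
  exists w. repeat split; auto. apply hk_large; auto; intros e; apply Hwa; auto.
Qed.

(* If F w approximates g with error at most B / |hk a w - hk a z|, then g is
   approximable, since that denominator can be made arbitrarily large. *)
Lemma approx_pole_family (g : Cx -> R) (F : Cx -> Cx -> R) (B : R) : 0 <= B ->
  (forall w, E w -> w <> a -> A (F w)) ->
  (forall w z, E w -> w <> a -> K1 z -> Rabs ((F w z - g z) * (hk a w - hk a z)) <= B) ->
  A g.
Proof.
  intros HB HF Herr. apply approx_limit. intros eps Heps.
  assert (HBe : 0 <= B / eps) by (apply Rmult_le_pos; [|left; apply Rinv_0_lt_compat]; lra).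
  destruct (pole_large_kernel (M + B / eps)) as [w [Ew [Hwa Hv]]]; [lra|].
  exists (F w). split; [apply HF; auto|]. intros z Kz.
  pose proof (Herr w z Ew Hwa Kz) as He. rewrite Rabs_mult in He.
  assert (Hgap : B / eps < Rabs (hk a w - hk a z))
    by (pose proof (hMb z Kz); pose proof (Rabs_triang_inv (hk a w) (hk a z)); lra).
  assert (Hgap' : B < eps * Rabs (hk a w - hk a z)).
  { apply (Rmult_lt_compat_l eps) in Hgap; auto.
    replace (eps * (B / eps)) with B in Hgap by (field; lra). exact Hgap. }
  pose proof (Rabs_pos (F w z - g z)). nra.
Qed.

(* The affine function of hk w which tends to hk a as w tends to a. *)
Definition pole_shift (w z : Cx) : R :=
  (- hk a w + hk a w ^ 2 * hk w z) / (1 + hk a w ^ 2).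

Lemma approx_pole_shift w : E w -> A (pole_shift w).
Proof.
  intros Ew. eapply approx_ext;
    [|apply (approx_lin E K1 (- hk a w / (1 + hk a w ^ 2)) (hk a w ^ 2 / (1 + hk a w ^ 2))
               (fun _ => 1) (hk w)); [apply approx_const | apply approx_hk; auto]].
  intros z _. unfold pole_shift. pose proof (pow2_ge_0 (hk a w)). field. lra.
Qed.

Lemma pole_shift_error w z : E w -> w <> a -> K1 z ->
  (pole_shift w z - hk a z) * (hk a w - hk a z) = hk a z ^ 2.
Proof.
  intros Ew Hwa Kz.
  pose proof (hk_addition a w z ha (hE w Ew) (hK1 z Kz) (haK z Kz) (not_eq_sym Hwa) (hEK w z Ew Kz)) as K.
  unfold pole_shift. set (v := hk a w) in *. set (u := hk a z) in *. set (g := hk w z) in *.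
  assert (Pv : 0 < 1 + v ^ 2) by (pose proof (pow2_ge_0 v); lra).
  apply (Rmult_eq_reg_r (1 + v ^ 2)); [|lra].
  transitivity (u ^ 2 * (1 + v ^ 2) + v ^ 2 * (g * (v - u) - (u * v + 1))); [field; lra|].
  rewrite K. ring.
Qed.

Lemma approx_pole_kernel : A (hk a).
Proof.
  apply (approx_pole_family (hk a) pole_shift (M ^ 2)); [apply pow2_ge_0| |].
  - intros w Ew _. apply approx_pole_shift; auto.
  - intros w z Ew Hwa Kz. rewrite pole_shift_error, <- RPow_abs by auto.
    apply pow_incr. split; [apply Rabs_pos | auto].
Qed.

Lemma approx_pole_kernel_sq : A (fun z => hk a z ^ 2).
Proof.
  apply (approx_pole_family _ (fun w z => hk a w * (pole_shift w z - hk a z)) (M ^ 3));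
    [apply pow_le; lra| |].
  - intros w Ew _. eapply approx_ext; [|apply (approx_lin E K1 (hk a w) (- hk a w) _ _
                                          (approx_pole_shift w Ew) approx_pole_kernel)].
    intros; cbv beta; ring.
  - intros w z Ew Hwa Kz.
    replace ((hk a w * (pole_shift w z - hk a z) - hk a z ^ 2) * (hk a w - hk a z))
      with (hk a w * ((pole_shift w z - hk a z) * (hk a w - hk a z)) - hk a z ^ 2 * (hk a w - hk a z))
      by ring.
    rewrite pole_shift_error by auto.
    replace (hk a w * hk a z ^ 2 - hk a z ^ 2 * (hk a w - hk a z)) with (hk a z ^ 3) by ring.
    rewrite <- RPow_abs. apply pow_incr. split; [apply Rabs_pos | auto].
Qed.

(* By the addition formula, hk a * hk w is affine in hk w and hk a (w <> a). *)
Lemma approx_pole_times_hk w : E w -> A (fun z => hk a z * hk w z).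
Proof.
  intros Ew. destruct (classic (w = a)) as [->|Hwa].
  - eapply approx_ext; [|apply approx_pole_kernel_sq]. intros; cbv beta; ring.
  - eapply approx_ext;
      [|apply (approx_add E K1 (fun z => hk a w * hk w z + (- hk a w) * hk a z) (fun _ => -1));
        [apply approx_lin; [apply approx_hk; auto | apply approx_pole_kernel] | apply approx_const]].
    intros z Kz; cbv beta.
    pose proof (hk_addition a w z ha (hE w Ew) (hK1 z Kz) (haK z Kz) (not_eq_sym Hwa) (hEK w z Ew Kz)).
    lra.
Qed.

Lemma approx_pole_times h : A h -> A (fun z => hk a z * h z).
Proof.
  intros Ah.
  assert (Hsum : forall n c0 c w, (forall k, (1 <= k <= n)%nat -> E (w k)) ->
                 A (fun z => hk a z * (c0 + hk_sum n c w z))).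
  { intros n c0 c w Hw. induction n.
    - eapply approx_ext; [|apply (approx_scal E K1 c0 _ approx_pole_kernel)]. intros; simpl; ring.
    - eapply approx_ext; [|apply (approx_lin E K1 1 (c (S n)) _ _
                                   (IHn (fun k Hk => Hw k ltac:(lia)))
                                   (approx_pole_times_hk (w (S n)) (Hw (S n) ltac:(lia))))].
      intros; simpl; ring. }
  apply approx_limit. intros eps Heps.
  destruct (Ah (eps / M)) as [n [c0 [c [w [Hw Hz]]]]]; [apply Rdiv_lt_0_compat; lra|].
  exists (fun z => hk a z * (c0 + hk_sum n c w z)). split; [apply Hsum; auto|].
  intros z Kz. rewrite <- Rmult_minus_distr_l, Rabs_mult.
  pose proof (Hz z Kz) as H1. pose proof (hMb z Kz) as H2.
  apply (Rmult_lt_compat_r M) in H1; [|lra].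
  unfold Rdiv in H1. rewrite Rmult_assoc, Rinv_l, Rmult_1_r in H1 by lra.
  pose proof (Rabs_pos (c0 + hk_sum n c w z - h z)). pose proof (Rabs_pos (hk a z)). nra.
Qed.

Definition pole_coord (z : Cx) : R := (hk a z + M) / (2 * M).

Lemma pole_coord_range z : K1 z -> 0 <= pole_coord z <= 1.
Proof.
  intros Kz. pose proof (hMb z Kz). pose proof (Rle_abs (hk a z)).
  pose proof (Rle_abs (- hk a z)). rewrite Rabs_Ropp in *. unfold pole_coord.
  split; [apply Rmult_le_pos; [lra | left; apply Rinv_0_lt_compat; lra]|].
  apply (Rmult_le_reg_r (2 * M)); [lra|].
  unfold Rdiv; rewrite Rmult_assoc, Rinv_l; lra.
Qed.

Lemma pole_coord_lipschitz z t : K1 z -> K1 t ->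
  Cdist z t <= 4 * M * Rabs (pole_coord z - pole_coord t).
Proof.
  intros Kz Kt.
  replace (4 * M * Rabs (pole_coord z - pole_coord t)) with (2 * Rabs (hk a z - hk a t)).
  - apply hk_inverse_lipschitz; auto.
  - replace (hk a z - hk a t) with (2 * M * (pole_coord z - pole_coord t))
      by (unfold pole_coord; field; lra).
    rewrite Rabs_mult, (Rabs_right (2 * M)) by lra. ring.
Qed.

(* Every continuous function on the compact K1 is approximable: it is a
   uniform limit of Bernstein polynomials in the coordinate pole_coord. *)
Theorem approx_continuous f : compactC K1 -> continuous_onC K1 f -> A f.
Proof.
  intros HK Hf.
  destruct (classic (exists z0, K1 z0)) as [Hne|Hempty].
  2:{ eapply approx_ext; [|apply (approx_const E K1 0)]. intros z Kz. exfalso; eauto. }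
  assert (Hmul : forall h, A h -> A (fun z => pole_coord z * h z)).
  { intros h Ah. eapply approx_ext;
      [|apply (approx_lin E K1 (/ (2 * M)) (/ 2) _ _ (approx_pole_times h Ah) Ah)].
    intros z _. unfold pole_coord. field. lra. }
  destruct (compact_bounded K1 f HK Hf) as [Mf HMf].
  apply approx_limit. intros eps Heps.
  destruct (compact_unif_cont K1 f HK Hf (eps / 2)) as [d [Hd Hu]]; [lra|].
  destruct (bernstein_approx Cx K1 pole_coord f Mf (d / (4 * M)) eps) as [n [p [Hp Happ]]];
    auto; [apply Rdiv_lt_0_compat; lra | apply pole_coord_range | |].
  - intros z t Kz Kt Hyz. apply Hu; auto.
    pose proof (pole_coord_lipschitz z t Kz Kt).
    apply (Rmult_lt_compat_l (4 * M)) in Hyz; [|lra].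
    replace (4 * M * (d / (4 * M))) with d in Hyz by (field; lra). lra.
  - exists (fun z => sum_f_R0 (fun k => f (p k) * bern n k (pole_coord z)) n). split; auto.
    apply (approx_sum E K1 n (fun k z => f (p k) * bern n k (pole_coord z))).
    intros k _. apply approx_scal, approx_bern; auto.
Qed.

End Pole.

Lemma rfun_re_im n c0 c w z :
  Re (rfun n c0 c w z) = c0 + hk_sum n c w z /\ Im (rfun n c0 c w z) = Re (herg_sum n c w z).
Proof.
  assert (Him : Im (herg_sum n c w z) = - hk_sum n c w z).
  { induction n; cbn [herg_sum hk_sum]; [unfold Im; simpl; ring|].
    revert IHn. unfold hk, ikernel.
    destruct (Cdiv (Cplus (w (S n)) z) (Cminus (w (S n)) z)), (herg_sum n c w z).
    unfold Cplus, Cmult, Ci, RtoC, Re, Im; simpl. intros ->. ring. }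
  unfold rfun. revert Him. destruct (herg_sum n c w z).
  unfold Cplus, Cmult, Ci, RtoC, Re, Im; simpl. intros ->. split; ring.
Qed.

Lemma herg_sum_re n c w z : unit_circle z ->
  (forall k, (1 <= k <= n)%nat -> unit_circle (w k) /\ w k <> z) ->
  Re (herg_sum n c w z) = 0.
Proof.
  intros Cz Hw. induction n; cbn [herg_sum]; [reflexivity|].
  destruct (Hw (S n)) as [Cw Hwz]; [lia|].
  pose proof (ikernel_real _ _ Hwz Cw Cz) as I. unfold ikernel in I.
  assert (IH : Re (herg_sum n c w z) = 0) by (apply IHn; intros; apply Hw; lia).
  revert I IH. destruct (Cdiv (Cplus (w (S n)) z) (Cminus (w (S n)) z)), (herg_sum n c w z).
  unfold Cplus, Cmult, Ci, RtoC, Re, Im; simpl. intros I ->. nra.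
Qed.

Lemma Cmod_sub_real (r : Cx) (x : R) : Im r = 0 -> Cmod (Cminus r (RtoC x)) = Rabs (Re r - x).
Proof.
  destruct r as [r1 r2]. unfold Cmod, Cminus, RtoC, Re, Im; simpl. intros ->.
  rewrite <- sqrt_Rsqr_abs. f_equal. unfold Rsqr. ring.
Qed.

Theorem mainTheorem5 (E K1 : Cx -> Prop)
  (hE : forall z, E z -> unit_circle z)
  (hEinf : infinite_set E)
  (hK1 : forall z, K1 z -> unit_circle z)
  (hK1c : compactC K1)
  (hdisj : forall z, closureC E z -> K1 z -> False) :
  (forall (n : nat) (c0 : R) (c : nat -> R) (w : nat -> Cx),
     (forall k, (1 <= k <= n)%nat -> E (w k)) ->
     forall z, K1 z -> Im (rfun n c0 c w z) = 0)
  /\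
  (forall f : Cx -> R, continuous_onC K1 f ->
   forall eps, 0 < eps ->
   exists (n : nat) (c0 : R) (c : nat -> R) (w : nat -> Cx),
     (forall k, (1 <= k <= n)%nat -> E (w k)) /\
     forall z, K1 z -> Cmod (Cminus (rfun n c0 c w z) (RtoC (f z))) < eps).
Proof.
  (* E, and its accumulation point a, lie in the closure of E, hence off K1. *)
  assert (hEK : forall w z, E w -> K1 z -> w <> z).
  { intros w z Ew Kz ->. apply (hdisj z); auto. intros eps Heps. exists z. rewrite Cdist_refl. auto. }
  assert (Hreal : forall n c0 c w, (forall k, (1 <= k <= n)%nat -> E (w k)) ->
                  forall z, K1 z -> Im (rfun n c0 c w z) = 0).
  { intros n c0 c w Hw z Kz. rewrite (proj2 (rfun_re_im n c0 c w z)).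
    apply herg_sum_re; auto. }
  split; auto. intros f Hf eps Heps.
  destruct (circle_accumulation E hE hEinf) as [a [Ca hacc]].
  assert (haK : forall z, K1 z -> a <> z).
  { intros z Kz ->. apply (hdisj z); auto. intros rho Hrho.
    destruct (hacc rho Hrho) as [w [Ew [_ Hd]]]. eauto. }
  destruct (compact_dist_pos K1 a hK1c) as [d [Hd Hdz]]; [intros z Kz ->; apply (haK a); auto|].
  (* The kernel u = hk a is bounded on K1 since K1 stays at distance d from a. *)
  set (M := Rmax 1 (2 / d)).
  assert (hMb : forall z, K1 z -> Rabs (hk a z) <= M).
  { intros z Kz. eapply Rle_trans; [apply (hk_bound a z d); auto | apply Rmax_r]. }
  destruct (approx_continuous E K1 a M hE hK1 Ca haK hEK hacc (Rmax_l 1 _) hMb f hK1c Hf eps Heps)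
    as [n [c0 [c [w [Hw Hz]]]]].
  exists n, c0, c, w. split; auto. intros z Kz.
  rewrite Cmod_sub_real, (proj1 (rfun_re_im n c0 c w z)); auto.
Qed.
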